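(* Assume (A1) and (A6) together with: (a) $M(1)\ge M(0)$ and $Y(1,1)\ge Y(0,m)$ for $m=0,1$; (b) for each $m\in\{0,1\}$, $A\perp\{Y(1,1),Y(0,m),M(1),M(0)\}\mid X$; (c) for each $m\in\{0,1\}$, $\{M(0),M(1)\}\perp Y(0,m)\mid X$; (d) there is $\epsilon>0$ with $P\{P(A=0,M=m\mid X)\ge\epsilon\}=1$ for $m=0,1$ and $P\{P(A=1,M=1\mid X)\ge\epsilon\}=1$. Then for (almost) every $x$, $$\delta(x) = \Big[1-\frac{\mu_{00}(x)}{\mu_{11}(x)}\Big]\Big[1-\frac{\gamma_0(x)}{\gamma_1(x)}\Big] + \Big[1-\frac{\mu_{01}(x)}{\mu_{11}(x)}\Big]\frac{\gamma_0(x)}{\gamma_1(x)}.$$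
   Context: Observed data $O=(X,A,M,Y)$ with covariates $X\in\mathbb{R}^d$, binary exposure $A$, binary mediator $M$, binary outcome $Y$. For $a,m\in\{0,1\}$, $Y(a,m)$ is the potential outcome under $A=a,M=m$, $M(a)$ the potential mediator, $Y(a):=Y(a,M(a))$, all on a common probability space with $O$. $\mu_{am}(x)=P(Y=1\mid A=a,M=m,X=x)$, $\gamma_a(x)=P(M=1\mid A=a,X=x)$. $\delta(x)=P(Y(0)=0\mid Y(1)=1,M(1)=1,X=x)$. (A1) consistency: $A=a,M=m\Rightarrow Y=Y(a,m)$ and $A=a\Rightarrow M=M(a)$. (A6) $P\{P(Y=1\mid A=1,M=1,X)\ge\epsilon\}=1$ for some $\epsilon>0$. *)

From HB Require Import structures.
From mathcomp Require Import all_boot all_order all_algebra.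
From mathcomp Require Import all_classical all_reals all_analysis.
Set Implicit Arguments. Unset Strict Implicit. Unset Printing Implicit Defensive.
Import Order.TTheory GRing.Theory Num.Theory.
Local Open Scope classical_set_scope.
Local Open Scope ring_scope.

(* [f] is a version of the conditional probability P(E | X), i.e.
   f is measurable and, for every measurable B of the covariate space,
   P(E /\ X \in B) = E[ f(X) ; X \in B ]. *)
Definition cprob_version {R : realType} {d : measure_display} {T : measurableType d}
  {dV : measure_display} {V : measurableType dV}
  (P : probability T R) (X : T -> V) (E : set T) (f : V -> R) : Prop :=
  measurable_fun setT f /\
  forall B : set V, measurable B ->
    P (E `&` X @^-1` B) = (\int[P]_(t in X @^-1` B) (f (X t))%:E)%E.

Definition cindep_ev {R : realType} {d : measure_display} {T : measurableType d}
  {dV : measure_display} {V : measurableType dV}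
  (P : probability T R) (X : T -> V) (E F : set T) : Prop :=
  forall fE fF fEF : V -> R,
    cprob_version P X E fE -> cprob_version P X F fF ->
    cprob_version P X (E `&` F) fEF ->
    {ae P, forall t, fEF (X t) = fE (X t) * fF (X t)}.

Definition cindep_rv {R : realType} {d : measure_display} {T : measurableType d}
  {dV : measure_display} {V : measurableType dV} {U W : Type}
  (P : probability T R) (X : T -> V) (u : T -> U) (w : T -> W) : Prop :=
  forall (a : U) (b : W), cindep_ev P X [set t | u t = a] [set t | w t = b].

(* Under (b), every observed conditional probability P(A = a, M = m | X) or
   P(Y = 1, A = a, M = m | X) factors as P(A = a | X) times the corresponding
   probability for the potential mediator and outcomes, and under (c) the
   potential outcome Y(0, m) factors off the mediator pair.  Monotonicity (a)
   splits {Y(1) = 1, M(1) = 1} almost surely into the disjoint strata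
   {Y(0) = 0, Y(1) = 1, M(1) = 1}, {M(0) = 0, M(1) = 1, Y(0, 0) = 1} and
   {M(0) = 1, Y(0, 1) = 1}, and {M(1) = 1} into {M(0) = 0, M(1) = 1} and
   {M(0) = 1}.  In these terms delta is a rational function of the observed
   quantities, and positivity (d), (A6) makes the final identity a field
   identity.  Conditional probabilities are handled as Radon-Nikodym densities
   with respect to the law of X, hence are unique almost surely and additive. *)

From HB Require Import structures.
From mathcomp Require Import all_boot all_order all_algebra.
From mathcomp Require Import all_classical all_reals all_analysis.
From mathcomp Require Import measurable_realfun ring.
Import Order.TTheory GRing.Theory Num.Theory.
Local Open Scope classical_set_scope.
Local Open Scope ring_scope.

Section measurable_levels.
Context {d : measure_display} {T : measurableType d}.

Lemma measurable_level_bool (f : T -> bool) :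
  measurable_fun setT f -> forall b, measurable [set t | f t = b].
Proof. by move=> mf b; rewrite -[X in measurable X]setTI; exact: (mf measurableT [set b] I). Qed.

Lemma measurable_level_pair {U W : Type} (u : T -> U) (w : T -> W) :
  (forall a, measurable [set t | u t = a]) ->
  (forall b, measurable [set t | w t = b]) ->
  forall c, measurable [set t | (u t, w t) = c].
Proof.
move=> mu mw [a b].
rewrite (_ : [set t | _ = _] = [set t | u t = a] `&` [set t | w t = b]).
  exact: measurableI.
by apply/seteqP; split=> t /= => [[-> ->]|[-> ->]].
Qed.

Lemma mem_levels_cons {W : eqType} (w : T -> W) b s :
  [set t | w t \in b :: s] = [set t | w t = b] `|` [set t | w t \in s].
Proof.
apply/seteqP; split=> t /=; rewrite in_cons; first by case/orP=> [/eqP|]; [left|right].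
by case=> [->|->]; rewrite ?eqxx ?orbT.
Qed.

Lemma preimage_finite_levels {W : finType} (w : T -> W) (S : set W) :
  w @^-1` S = [set t | w t \in [seq b <- enum W | `[< S b >]]].
Proof. by apply/seteqP; split=> t /=; rewrite mem_filter mem_enum andbT => /asboolP. Qed.

Lemma measurable_mem_levels {W : eqType} (w : T -> W) (s : seq W) :
  (forall b, measurable [set t | w t = b]) -> measurable [set t | w t \in s].
Proof.
move=> mw; elim: s => [|b s ms]; last by rewrite mem_levels_cons; exact: measurableU.
by rewrite (_ : [set t | _] = set0) //; apply/seteqP; split=> t.
Qed.

Lemma measurable_preimage_finite {W : finType} (w : T -> W) (S : set W) :
  (forall b, measurable [set t | w t = b]) -> measurable (w @^-1` S).
Proof. by rewrite preimage_finite_levels; exact: measurable_mem_levels. Qed.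

End measurable_levels.

Section conditional_probability.
Context {R : realType} {d : measure_display} {T : measurableType d}
  (P : probability T R) {dV : measure_display} {V : measurableType dV}
  (X : T -> V) (mX : measurable_fun setT X).

Let mpreX B : measurable B -> measurable (X @^-1` B).
Proof. by move=> mB; rewrite -[X in measurable X]setTI; exact: mX. Qed.

Let law := distribution P (HB.pack X (isMeasurableFun.Build _ _ _ _ _ mX)).

Definition joint_measure (E : set T) (B : set V) : \bar R := P (E `&` X @^-1` B).

Section joint_measure.
Variables (E : set T) (mE : measurable E).

Let joint_measure0 : joint_measure E set0 = 0%E.
Proof. by rewrite /joint_measure preimage_set0 setI0 measure0. Qed.

Let joint_measure_ge0 B : (0 <= joint_measure E B)%E.
Proof. exact: measure_ge0. Qed.

Let joint_measure_sigma_additive : semi_sigma_additive (joint_measure E).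
Proof.
move=> F mF tF mUF; rewrite /joint_measure preimage_bigcup setI_bigcupr.
apply: measure_semi_sigma_additive.
- by move=> n; apply: measurableI => //; exact: mpreX.
- apply/trivIsetP => /= i j _ _ ij.
  rewrite setIACA setIid -preimage_setI.
  by move/trivIsetP : tF => /(_ _ _ _ _ ij) ->//; rewrite preimage_set0 setI0.
- by rewrite -setI_bigcupr -preimage_bigcup; apply: measurableI => //; exact: mpreX.
Qed.

HB.instance Definition _ := isMeasure.Build _ _ _ (joint_measure E)
  joint_measure0 joint_measure_ge0 joint_measure_sigma_additive.

Let joint_measure_fin : fin_num_fun (joint_measure E).
Proof.
move=> B mB; rewrite ge0_fin_numE//; apply: (@le_lt_trans _ _ 1%E); last by rewrite ltry.
rewrite -(probability_setT P); apply: le_measure; rewrite ?inE//.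
by apply: measurableI => //; exact: mpreX.
Qed.

HB.instance Definition _ := @Measure_isFinite.Build _ V _ (joint_measure E)
  joint_measure_fin.

Let joint_measure_dominated : joint_measure E `<< law.
Proof.
apply/null_content_dominatesP => B mB /= PXB0.
apply/eqP; rewrite eq_le measure_ge0 andbT -PXB0.
by apply: le_measure => //; rewrite inE//; [apply: measurableI => //|]; exact: mpreX.
Qed.

Lemma joint_density_exists : exists r : V -> \bar R,
  [/\ forall x, (0 <= r x)%E, law.-integrable [set: V] r &
      forall B, measurable B -> joint_measure E B = (\int[law]_(x in B) r x)%E].
Proof. exact: radon_nikodym_finite joint_measure_dominated. Qed.

End joint_measure.

Local Open Scope ereal_scope.

(* Unlike [integral_pushforward], no integrability is required: the positive
   and negative parts are transported separately. *)
Lemma integral_law (g : V -> \bar R) (B : set V) :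
  measurable_fun setT g -> measurable B ->
  \int[law]_(x in B) g x = \int[P]_(t in X @^-1` B) g (X t).
Proof.
move=> mg mB; rewrite integralE [RHS]integralE /law /distribution /=.
rewrite (@ge0_integral_pushforward _ _ _ _ _ X mX P B g^\+ mB); last 2 first.
- exact/measurable_funepos/measurable_funTS.
- by move=> x _; exact: funepos_ge0.
rewrite (@ge0_integral_pushforward _ _ _ _ _ X mX P B g^\- mB); last 2 first.
- exact/measurable_funeneg/measurable_funTS.
- by move=> x _; exact: funeneg_ge0.
by rewrite -funepos_comp -funeneg_comp.
Qed.

Lemma ae_law_comp (Q : V -> Prop) : {ae law, forall v, Q v} -> {ae P, forall t, Q (X t)}.
Proof.
by case=> N [mN N0 QN]; exists (X @^-1` N); split => //; [exact: mpreX|move=> t /QN].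
Qed.

Local Notation version := (cprob_version P X).

Lemma cprob_version_density E f r : measurable E -> version E f ->
  (forall x, 0 <= r x) -> law.-integrable [set: V] r ->
  (forall B, measurable B -> joint_measure E B = \int[law]_(x in B) r x) ->
  ae_eq law setT r (fun v => (f v)%:E).
Proof.
move=> mE [mf fE] r0 ri rE; apply: integral_ae_eq => //; first exact/measurable_EFinP.
by move=> B _ mB; rewrite -rE// integral_law//; [exact: fE|exact/measurable_EFinP].
Qed.

Lemma cprob_version_integrable E f : measurable E -> version E f ->
  P.-integrable setT (fun t => (f (X t))%:E).
Proof.
move=> mE vf; have [r [r0 ri rE]] := joint_density_exists _ mE.
have rf := cprob_version_density _ _ _ mE vf r0 ri rE.
case: vf => mf _; apply/integrableP; split.
  by apply/measurable_EFinP; exact: measurableT_comp.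
rewrite -[setT]/(X @^-1` setT)
  -(@ge0_integral_pushforward _ _ _ _ _ X mX P setT (fun v => `|(f v)%:E|)) //;
  last by apply: measurableT_comp => //; exact/measurable_EFinP.
rewrite -/law (@ae_eq_integral _ _ _ law _ (fun v => `|r v|)) //.
- by case/integrableP: ri.
- by apply: measurableT_comp => //; exact/measurable_EFinP.
- by apply: measurableT_comp => //; exact: measurable_int ri.
- by apply: filterS rf => v rfv /rfv ->.
Qed.

(* Some version of P(E | X), or [0] when there is none (e.g. [E] not measurable). *)
Definition cprob (E : set T) : V -> R := xget (fun=> 0%R) (version E).

Lemma cprobP E : measurable E -> version E (cprob E).
Proof.
move=> mE; apply: xgetPex; have [r [r0 ri rE]] := joint_density_exists _ mE.
have mr : measurable_fun setT r by exact: measurable_int ri.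
have mfr : measurable_fun setT (fun v => fine (r v)).
  by apply: measurableT_comp => //; exact: fine_measurable.
exists (fun v => fine (r v)); split => // B mB.
rewrite -(integral_law (fun v => (fine (r v))%:E))//; last exact/measurable_EFinP.
rewrite -/(joint_measure E B) rE//; apply: ae_eq_integral => //.
- exact: measurable_funTS.
- by apply: measurable_funTS; exact/measurable_EFinP.
- by apply: filterS (integrable_ae measurableT ri) => v rv Bv; rewrite fineK// rv.
Qed.

Lemma cprob_version_ae_unique E f g : measurable E -> version E f -> version E g ->
  {ae P, forall t, f (X t) = g (X t)}.
Proof.
move=> mE vf vg; have [r [r0 ri rE]] := joint_density_exists _ mE.
have rf := cprob_version_density _ _ _ mE vf r0 ri rE.
have rg := cprob_version_density _ _ _ mE vg r0 ri rE.
apply: (ae_law_comp (fun v => f v = g v)); apply: filterS2 rf rg => v rf rg.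
by have := rf I; rewrite rg// => -[].
Qed.

Lemma cprob_versionU E F f g : measurable E -> measurable F -> E `&` F = set0 ->
  version E f -> version F g -> version (E `|` F) (fun v => (f v + g v)%R).
Proof.
move=> mE mF EF vf vg.
have fi := cprob_version_integrable _ _ mE vf; have gi := cprob_version_integrable _ _ mF vg.
case: vf => mf fE; case: vg => mg gE; split; first exact: measurable_funD.
move=> B mB; have mXB := mpreX _ mB.
rewrite setIUl measureU; [|exact: measurableI|exact: measurableI|];
  last by rewrite setIACA EF set0I.
transitivity (\int[P]_(t in X @^-1` B) (f (X t))%:E + \int[P]_(t in X @^-1` B) (g (X t))%:E).
  by congr (_ + _); [exact: fE|exact: gE].
under [RHS]eq_integral do rewrite EFinD.
rewrite integralD//.
- by apply: integrableS fi.
- by apply: integrableS gi.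
Qed.

Lemma measure_ae_eq_set (E F : set T) : measurable E -> measurable F ->
  {ae P, forall t, E t <-> F t} -> P E = P F.
Proof.
move=> mE mF [N [mN N0 EFN]].
have NU := (null_setU P mN).1 ((measure0_null_setP _ mN).2 N0).
rewrite -(NU E mE) -(NU F mF); congr (P _); apply/seteqP.
split=> t [Et|Nt]; try by right.
- by have [EF|/EFN] := pselect (E t <-> F t); [left; apply/EF|right].
- by have [EF|/EFN] := pselect (E t <-> F t); [left; apply/EF|right].
Qed.

Lemma cprob_version_ae_event E F f : measurable E -> measurable F ->
  {ae P, forall t, E t <-> F t} -> version E f -> version F f.
Proof.
move=> mE mF EF [mf fE]; split => // B mB; have mXB := mpreX _ mB; rewrite -fE//.
apply: measure_ae_eq_set; [exact: measurableI|exact: measurableI|].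
by apply: filterS EF => t EFt; split=> -[Gt XBt]; split=> //; apply/EFt.
Qed.

Lemma cprob_version_set0 : version set0 (fun=> 0%R).
Proof. by split => // B mB; rewrite set0I measure0 integral0. Qed.

Lemma cprob_version_partition (E F G : set T) f g h :
  measurable E -> measurable F -> measurable G -> E `&` F = set0 ->
  {ae P, forall t, E t \/ F t <-> G t} ->
  version E f -> version F g -> version G h ->
  {ae P, forall t, h (X t) = (f (X t) + g (X t))%R}.
Proof.
move=> mE mF mG EF EFG vf vg vh.
have vEF := cprob_version_ae_event _ _ _ (measurableU _ _ mE mF) mG EFG
  (cprob_versionU _ _ _ _ mE mF EF vf vg).
exact: cprob_version_ae_unique vh vEF.
Qed.

End conditional_probability.

Arguments cprobP {R d T P dV V X} mX {E}.
Arguments cprob_version_ae_unique {R d T P dV V X} mX {E f g}.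
Arguments cprob_version_partition {R d T P dV V X} mX {E F G f g h}.

Section conditional_independence.
Context {R : realType} {d : measure_display} {T : measurableType d}
  (P : probability T R) {dV : measure_display} {V : measurableType dV}
  (X : T -> V) (mX : measurable_fun setT X).

Local Notation cp := (cprob P X).

Lemma cindep_ev_cprob E F : measurable E -> measurable F -> cindep_ev P X E F ->
  {ae P, forall t, cp (E `&` F) (X t) = cp E (X t) * cp F (X t)}.
Proof. by move=> mE mF; apply; apply: cprobP => //; exact: measurableI. Qed.

Lemma cindep_evC E F : cindep_ev P X E F -> cindep_ev P X F E.
Proof.
move=> EF fF fE fFE vF vE; rewrite setIC => vEF.
by apply: filterS (EF _ _ _ vE vF vEF) => t ->; rewrite mulrC.
Qed.

Lemma cindep_ev_set0 E : cindep_ev P X E set0.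
Proof.
move=> fE f0 fE0 _ v0; rewrite setI0 => vE0.
have v0' := cprob_version_set0 P X.
have f00 := cprob_version_ae_unique mX measurable0 v0 v0'.
have fE00 := cprob_version_ae_unique mX measurable0 vE0 v0'.
by apply: filterS2 f00 fE00 => t -> ->; rewrite mulr0.
Qed.

Lemma cindep_evU E F1 F2 : measurable E -> measurable F1 -> measurable F2 ->
  F1 `&` F2 = set0 -> cindep_ev P X E F1 -> cindep_ev P X E F2 ->
  cindep_ev P X E (F1 `|` F2).
Proof.
move=> mE mF1 mF2 F12 EF1 EF2 fE fF fEF vE vF vEF.
have mEF1 := measurableI _ _ mE mF1; have mEF2 := measurableI _ _ mE mF2.
have EF12 : (E `&` F1) `&` (E `&` F2) = set0 by rewrite setIACA setIid F12 setI0.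
have fFE := cprob_version_partition mX mF1 mF2 (measurableU _ _ mF1 mF2)
  F12 (aeW P (fun t => iff_refl _)) (cprobP mX mF1) (cprobP mX mF2) vF.
have EFU : {ae P, forall t, (E `&` F1) t \/ (E `&` F2) t <-> (E `&` (F1 `|` F2)) t}.
  by apply: aeW => t; rewrite setIUr.
have fEFE := cprob_version_partition mX mEF1 mEF2
  (measurableI _ _ mE (measurableU _ _ mF1 mF2)) EF12 EFU
  (cprobP mX mEF1) (cprobP mX mEF2) vEF.
have e1 := EF1 _ _ _ vE (cprobP mX mF1) (cprobP mX mEF1).
have e2 := EF2 _ _ _ vE (cprobP mX mF2) (cprobP mX mEF2).
near=> t.
rewrite (near fFE t)// (near fEFE t)// (near e1 t)// (near e2 t)// mulrDr.
Unshelve. all: by end_near.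
Qed.

Lemma cindep_ev_mem_levels {W : eqType} (w : T -> W) E : measurable E ->
  (forall b, measurable [set t | w t = b]) ->
  (forall b, cindep_ev P X E [set t | w t = b]) ->
  forall s : seq W, cindep_ev P X E [set t | w t \in s].
Proof.
move=> mE mw Ew; elim=> [|b s Es].
  rewrite (_ : [set t | w t \in [::]] = set0); first exact: cindep_ev_set0.
  by apply/seteqP; split=> t.
have [bs|bNs] := boolP (b \in s).
  rewrite (_ : [set t | w t \in b :: s] = [set t | w t \in s]) //.
  apply/seteqP; split=> t /=; rewrite in_cons; last by move=> ->; rewrite orbT.
  by case/orP=> [/eqP ->|].
rewrite mem_levels_cons; apply: cindep_evU => //; first exact: measurable_mem_levels.
by apply/seteqP; split=> t //= [->]; rewrite (negbTE bNs).
Qed.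

Lemma cindep_rv_preimage {U W : finType} (u : T -> U) (w : T -> W) :
  (forall a, measurable [set t | u t = a]) ->
  (forall b, measurable [set t | w t = b]) ->
  cindep_rv P X u w ->
  forall (S1 : set U) (S2 : set W), cindep_ev P X (u @^-1` S1) (w @^-1` S2).
Proof.
move=> mu mw uw S1 S2; apply: cindep_evC; rewrite (preimage_finite_levels u).
apply: cindep_ev_mem_levels => //; first exact: measurable_preimage_finite.
move=> a; apply: cindep_evC; rewrite (preimage_finite_levels w).
exact: cindep_ev_mem_levels.
Qed.

End conditional_independence.

Arguments cindep_ev_cprob {R d T P dV V X} mX {E F}.
Arguments cindep_rv_preimage {R d T P dV V X} mX {U W u w}.

Local Ltac case_potential_outcomes Mp Yp :=
  repeat match goal with |- context [Mp ?a ?t] => case: (Mp a t) end;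
  repeat match goal with |- context [Yp ?a ?m ?t] => case: (Yp a m t) end.

Section mediation.
Context {R : realType} {d : measure_display} {T : measurableType d}
  (P : probability T R) {dV : measure_display} {V : measurableType dV}
  (X : T -> V) (mX : measurable_fun setT X)
  (A M Y : T -> bool) (Yp : bool -> bool -> T -> bool) (Mp : bool -> T -> bool).
Hypotheses (mA : measurable_fun setT A)
  (mYp : forall a m, measurable_fun setT (Yp a m))
  (mMp : forall a, measurable_fun setT (Mp a)).

Local Notation version := (cprob_version P X).
Local Notation cp := (cprob P X).

Local Notation compliers := [set t | Mp false t = false /\ Mp true t = true].
Local Notation Y1M1 := [set t | Yp true (Mp true t) t = true /\ Mp true t = true].
Local Notation Y0nY1M1 := [set t | Yp false (Mp false t) t = false /\
  Yp true (Mp true t) t = true /\ Mp true t = true].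
Local Notation compliers_Y00 := (compliers `&` [set t | Yp false false t]).
Local Notation M0_Y01 := ([set t | Mp false t = true] `&` [set t | Yp false true t]).

Let mYM a : measurable_fun setT (fun t => Yp a (Mp a t) t).
Proof.
rewrite (_ : (fun t => _) = fun t => Mp a t && Yp a true t || ~~ Mp a t && Yp a false t).
  by apply: measurable_or; apply: measurable_and => //; exact: measurable_neg.
by apply/funext => t; case: (Mp a t); rewrite /= ?orbF.
Qed.

Hypotheses (ignorability : forall m,
    cindep_rv P X A (fun t => (Yp true true t, Yp false m t, Mp true t, Mp false t)))
  (cross_world : forall m, cindep_rv P X (fun t => (Mp false t, Mp true t)) (Yp false m)).

Let cindep_treatment a m (S : set (bool * bool * bool * bool)) :
  cindep_ev P X [set t | A t = a]
    [set t | S (Yp true true t, Yp false m t, Mp true t, Mp false t)].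
Proof.
apply: (cindep_rv_preimage mX _ _ (ignorability m) [set a] S).
  exact: measurable_level_bool.
by do ![apply: measurable_level_pair|exact: measurable_level_bool].
Qed.

Let cindep_mediator m (S : set (bool * bool)) :
  cindep_ev P X [set t | S (Mp false t, Mp true t)] [set t | Yp false m t].
Proof.
apply: (cindep_rv_preimage mX _ _ (cross_world m) S [set true]).
  by apply: measurable_level_pair; exact: measurable_level_bool.
exact: measurable_level_bool.
Qed.

Let mMp_ a m : measurable [set t | Mp a t = m].
Proof. exact: measurable_level_bool. Qed.

Let mYp_ a m : measurable [set t | Yp a m t].
Proof. exact: measurable_level_bool. Qed.

Hypotheses (consistency_Y : forall t a m, A t = a -> M t = m -> Y t = Yp a m t)
  (consistency_M : forall t a, A t = a -> M t = Mp a t).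

Lemma treatment_mediator_event a m :
  [set t | A t = a /\ M t = m] = [set t | A t = a] `&` [set t | Mp a t = m].
Proof.
apply/seteqP; split=> t /= [At Mt]; split=> //.
- by rewrite -(consistency_M _ _ At).
- by rewrite (consistency_M _ _ At).
Qed.

Lemma outcome_treatment_mediator_event a m :
  [set t | Y t = true /\ A t = a /\ M t = m] =
  [set t | A t = a] `&` ([set t | Mp a t = m] `&` [set t | Yp a m t]).
Proof.
apply/seteqP; split=> t /=.
- move=> [Yt [At Mt]]; split=> //; split; first by rewrite -(consistency_M _ _ At).
  by rewrite -(consistency_Y _ _ _ At Mt).
- move=> [At [Mpt Ypt]]; have Mt : M t = m by rewrite (consistency_M _ _ At).
  by rewrite (consistency_Y _ _ _ At Mt).
Qed.

Lemma treatment_mediator_factor a m f g :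
  version [set t | A t = a /\ M t = m] f -> version [set t | A t = a] g ->
  {ae P, forall t, f (X t) = g (X t) * cp [set t | Mp a t = m] (X t)}.
Proof.
rewrite treatment_mediator_event => vf vg.
have AM : cindep_ev P X [set t | A t = a] [set t | Mp a t = m].
  case: a {vf vg}; first exact: (cindep_treatment _ true [set s | s.1.2 = m]).
  exact: (cindep_treatment _ true [set s | s.2 = m]).
exact: AM vg (cprobP mX (mMp_ a m)) vf.
Qed.

Lemma treated_outcome_factor f g h :
  version [set t | Y t = true /\ A t = true /\ M t = true] f ->
  version [set t | A t = true] g ->
  version Y1M1 h -> {ae P, forall t, f (X t) = g (X t) * h (X t)}.
Proof.
rewrite outcome_treatment_mediator_event => vf vg.
rewrite (_ : [set t | _ /\ _] = [set t | Mp true t = true] `&` [set t | Yp true true t]).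
  move=> vh; exact: (cindep_treatment true true
    [set s : bool * bool * bool * bool | s.1.2 = true /\ s.1.1.1] _ _ _ vg vh vf).
by apply/seteqP; split=> t /=; case: (Mp true t) => -[].
Qed.

Lemma control_outcome_factor m f g :
  version [set t | Y t = true /\ A t = false /\ M t = m] f ->
  version [set t | A t = false] g ->
  {ae P, forall t, f (X t) =
     g (X t) * (cp [set t | Mp false t = m] (X t) * cp [set t | Yp false m t] (X t))}.
Proof.
rewrite outcome_treatment_mediator_event => vf vg.
have mMY := measurableI _ _ (mMp_ false m) (mYp_ false m).
have AMY := cindep_treatment false m
  [set s : bool * bool * bool * bool | s.2 = m /\ s.1.1.2] _ _ _ vg (cprobP mX mMY) vf.
have MY := cindep_ev_cprob mX (mMp_ false m) (mYp_ false m)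
  (cindep_mediator m [set s | s.1 = m]).
by apply: filterS2 AMY MY => t -> ->.
Qed.

Hypotheses (monotone_M : {ae P, forall t, Mp false t ==> Mp true t})
  (monotone_Y : {ae P, forall t, forall m, Yp false m t ==> Yp true true t}).

Let mcompliers : measurable compliers.
Proof. exact: measurableI (mMp_ false false) (mMp_ true true). Qed.

Lemma mediator_strata : {ae P, forall t,
  cp [set t | Mp true t = true] (X t) =
  cp compliers (X t) + cp [set t | Mp false t = true] (X t)}.
Proof.
apply: (cprob_version_partition mX mcompliers (mMp_ false true) (mMp_ true true) _ _
  (cprobP mX mcompliers) (cprobP mX (mMp_ false true)) (cprobP mX (mMp_ true true))).
  by apply/seteqP; split=> t //= [[->]].
apply: filterS monotone_M => t; rewrite /=.
case_potential_outcomes Mp Yp; intuition discriminate.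
Qed.

Let Y0nY1M1_disjoint : Y0nY1M1 `&` (compliers_Y00 `|` M0_Y01) = set0.
Proof.
by apply/seteqP; split=> t //=; case_potential_outcomes Mp Yp; intuition discriminate.
Qed.

Let compliers_M0_disjoint : compliers_Y00 `&` M0_Y01 = set0.
Proof.
by apply/seteqP; split=> t //=; case_potential_outcomes Mp Yp; intuition discriminate.
Qed.

Let Y1M1_strata :
  {ae P, forall t, Y0nY1M1 t \/ (compliers_Y00 `|` M0_Y01) t <-> Y1M1 t}.
Proof.
apply: filterS2 monotone_M monotone_Y => t M01 Y0.
move: M01 (Y0 false) (Y0 true) => /=.
by case_potential_outcomes Mp Yp; intuition discriminate.
Qed.

Lemma outcome_strata f g : version Y0nY1M1 f -> version Y1M1 g ->
  {ae P, forall t, g (X t) = f (X t)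
    + cp compliers (X t) * cp [set t | Yp false false t] (X t)
    + cp [set t | Mp false t = true] (X t) * cp [set t | Yp false true t] (X t)}.
Proof.
move=> vf vg.
have mK00 := measurableI _ _ mcompliers (mYp_ false false).
have mK01 := measurableI _ _ (mMp_ false true) (mYp_ false true).
have mK := measurableU _ _ mK00 mK01.
have mY1 := measurable_level_bool _ (mYM true) true.
have mY1M1 := measurableI _ _ mY1 (mMp_ true true).
have mY0nY1M1 := measurableI _ _ (measurable_level_bool _ (mYM false) false) mY1M1.
have strata := cprob_version_partition mX mY0nY1M1 mK mY1M1 Y0nY1M1_disjoint
  Y1M1_strata vf (cprobP mX mK) vg.
have K := cprob_version_partition mX mK00 mK01 mK compliers_M0_disjoint
  (aeW P (fun t => iff_refl _)) (cprobP mX mK00) (cprobP mX mK01) (cprobP mX mK).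
have K00 := cindep_ev_cprob mX mcompliers (mYp_ false false)
  (cindep_mediator false [set s | s.1 = false /\ s.2 = true]).
have K01 := cindep_ev_cprob mX (mMp_ false true) (mYp_ false true)
  (cindep_mediator true [set s | s.1 = true]).
near=> t.
rewrite (near strata t)// (near K t)// (near K00 t)// (near K01 t)// addrA.
Unshelve. all: by end_near.
Qed.

End mediation.

Arguments treatment_mediator_factor {R d T P dV V X} mX {A M Yp Mp} mA mYp mMp
  ignorability consistency_M a m {f g}.
Arguments treated_outcome_factor {R d T P dV V X} mX {A M Y Yp Mp} mA mYp mMp
  ignorability consistency_Y consistency_M {f g h}.
Arguments control_outcome_factor {R d T P dV V X} mX {A M Y Yp Mp} mA mYp mMp
  ignorability cross_world consistency_Y consistency_M m {f g}.
Arguments mediator_strata {R d T P dV V X} mX {Mp} mMp monotone_M.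
Arguments outcome_strata {R d T P dV V X} mX {Yp Mp} mYp mMp cross_world
  monotone_M monotone_Y {f g}.

Lemma mediation_ratio_identity {F : fieldType}
    {p00 p01 p11 q00 q01 q11 pA0 pA1 g0 g1 n0 l c00 c01 gn gd : F} :
  p00 != 0 -> p01 != 0 -> p11 != 0 -> q11 / p11 != 0 ->
  p11 = pA1 * g1 -> p01 = pA0 * g0 -> p00 = pA0 * n0 ->
  q11 = pA1 * gd -> q00 = pA0 * (n0 * c00) -> q01 = pA0 * (g0 * c01) ->
  g1 = l + g0 -> gd = gn + l * c00 + g0 * c01 ->
  gn / gd = (1 - q00 / p00 / (q11 / p11)) * (1 - p01 / pA0 / (p11 / pA1))
          + (1 - q01 / p01 / (q11 / p11)) * (p01 / pA0 / (p11 / pA1)).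
Proof.
move=> p00n p01n p11n mu11n p11E p01E p00E q11E q00E q01E g1E gdE.
move: p11n p01n p00n; rewrite p11E p01E p00E !mulf_eq0 !negb_or.
move=> /andP[pA1n g1n] /andP[pA0n g0n] /andP[_ n0n].
have gdn : gd != 0 by apply: contraNneq mu11n => gd0; rewrite q11E gd0 mulr0 mul0r.
have -> : gn = gd - (g1 - g0) * c00 - g0 * c01 by rewrite gdE g1E; ring.
rewrite q11E q00E q01E; field.
by rewrite gdn g1n pA1n pA0n n0n g0n.
Qed.

Theorem mainTheorem3 (R : realType) (d : measure_display) (T : measurableType d)
  (P : probability T R) (dV : measure_display) (V : measurableType dV)
  (X : T -> V) (A M Y : T -> bool) (Yp : bool -> bool -> T -> bool)
  (Mp : bool -> T -> bool)
  (p q : bool -> bool -> V -> R) (pA : bool -> V -> R) (gnum gden : V -> R) :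
  measurable_fun setT X -> measurable_fun setT A -> measurable_fun setT M ->
  measurable_fun setT Y -> (forall a m, measurable_fun setT (Yp a m)) ->
  (forall a, measurable_fun setT (Mp a)) ->
  (forall a m, cprob_version P X [set t | A t = a /\ M t = m] (p a m)) ->
  (forall a m, cprob_version P X [set t | Y t = true /\ A t = a /\ M t = m] (q a m)) ->
  (forall a, cprob_version P X [set t | A t = a] (pA a)) ->
  cprob_version P X
    [set t | Yp false (Mp false t) t = false /\ Yp true (Mp true t) t = true
             /\ Mp true t = true] gnum ->
  cprob_version P X [set t | Yp true (Mp true t) t = true /\ Mp true t = true] gden ->
  (forall t a m, A t = a -> M t = m -> Y t = Yp a m t) ->
  (forall t a, A t = a -> M t = Mp a t) ->
  (exists2 eps : R, 0 < eps & {ae P, forall t, eps <= q true true (X t) / p true true (X t)}) ->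
  {ae P, forall t, Mp false t ==> Mp true t} ->
  {ae P, forall t, forall m, Yp false m t ==> Yp true true t} ->
  (forall m, cindep_rv P X A (fun t => (Yp true true t, Yp false m t, Mp true t, Mp false t))) ->
  (forall m, cindep_rv P X (fun t => (Mp false t, Mp true t)) (Yp false m)) ->
  (exists2 eps : R, 0 < eps &
     {ae P, forall t, eps <= p false false (X t) /\ eps <= p false true (X t)
                      /\ eps <= p true true (X t)}) ->
  {ae P, forall t,
     gnum (X t) / gden (X t) =
       (1 - q false false (X t) / p false false (X t) / (q true true (X t) / p true true (X t)))
       * (1 - (p false true (X t) / pA false (X t)) / (p true true (X t) / pA true (X t)))
     + (1 - q false true (X t) / p false true (X t) / (q true true (X t) / p true true (X t)))
       * ((p false true (X t) / pA false (X t)) / (p true true (X t) / pA true (X t)))}.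
Proof.
move=> mX mA _ _ mYp mMp vp vq vpA vgnum vgden cY cM [e1 e1_gt0 mu11_ge]
  monoM monoY ign cw [e2 e2_gt0 p_ge].
have tm a m := treatment_mediator_factor mX mA mYp mMp ign cM a m (vp a m) (vpA a).
have co m := control_outcome_factor mX mA mYp mMp ign cw cY cM m (vq false m) (vpA false).
have q11E := treated_outcome_factor mX mA mYp mMp ign cY cM (vq true true) (vpA true) vgden.
have g1E := mediator_strata mX mMp monoM.
have gdE := outcome_strata mX mYp mMp cw monoM monoY vgnum vgden.
have mu11_neq0 : {ae P, forall t, q true true (X t) / p true true (X t) != 0}.
  by apply: filterS mu11_ge => t /(lt_le_trans e1_gt0)/lt0r_neq0.
have p_neq0 : {ae P, forall t, [/\ p false false (X t) != 0, p false true (X t) != 0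
                                 & p true true (X t) != 0]}.
  by apply: filterS p_ge => t [? [? ?]]; split; apply/lt0r_neq0/(lt_le_trans e2_gt0).
near=> t.
have [//|p00n p01n p11n] := near p_neq0 t.
refine (mediation_ratio_identity p00n p01n p11n (near mu11_neq0 t _)
  (near (tm true true) t _) (near (tm false true) t _) (near (tm false false) t _)
  (near q11E t _) (near (co false) t _) (near (co true) t _)
  (near g1E t _) (near gdE t _)); done.
Unshelve. all: by end_near.
Qed.
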